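(* Let $\sigma'\in\Sigma_{E_N}$, $\beta\in[0,\infty]$ and $\kappa\ge0$. Then $\mu_{N,\beta,\kappa}(\{\sigma\in\Sigma_{E_N}:\sigma'\le\sigma\})\le\varphi_{\beta,\kappa}(\sigma')$.
   Context: $G=\mathbb Z_n$, $\rho$ a faithful unitary one-dimensional representation. On $\mathbb Z^4$, $E_N,P_N$ are the oriented edges/plaquettes with vertices in $B_N=[-N,N]^4\cap\mathbb Z^4$; $\partial p$ the oriented boundary edges of $p$. $\Sigma_{E_N}$: $\sigma:E_N\to G$ with $\sigma_{-e}=-\sigma_e$; $(d\sigma)_p=\sum_{e\in\partial p}\sigma_e$. For $r\ge0$, $\varphi_r(g)=e^{r(\mathrm{Re}\rho(g)-1)}$, $\varphi_\infty(g)=\mathbb 1_{g=0}$; $\varphi_{\beta,\kappa}(\sigma)=\prod_{e\in E_N}\varphi_\kappa(\sigma_e)\prod_{p\in P_N}\varphi_\beta((d\sigma)_p)$. $\mu_{N,\beta,\kappa}(\sigma)=\varphi_{\beta,\kappa}(\sigma)/\sum_{\sigma''\in\Sigma_{E_N}}\varphi_{\beta,\kappa}(\sigma'')$ (for $\beta<\infty$ this is $\propto\exp(\beta\sum_p\rho((d\sigma)_p)+\kappa\sum_e\rho(\sigma_e))$; for $\beta=\infty$ it is supported on $d\sigma=0$). Partial order: $\sigma'\le\sigma$ iff $\sigma'=\sigma|_{\mathrm{supp}\,\sigma'}$ and $d\sigma'=(d\sigma)|_{\mathrm{supp}\,d\sigma'}$. *)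

From mathcomp Require Import all_boot all_order all_algebra.
From mathcomp Require Import reals constructive_ereal ereal.
From mathcomp.analysis Require Import sequences exp.
From mathcomp Require Import complex.
Set Implicit Arguments.
Unset Strict Implicit.
Unset Printing Implicit Defensive.
Import Order.TTheory GRing.Theory Num.Theory.
Local Open Scope ring_scope.

(* Vertices of B_N = [-N,N]^4 ∩ Z^4: coordinate c : 'I_(2N+1) stands for c - N. *)
Definition vert (N : nat) := {ffun 'I_4 -> 'I_(N.*2.+1)}.

(* x + e_j  (only used when x_j < 2N, i.e. when it stays in the box) *)
Definition shift N (x : vert N) (j : 'I_4) : vert N :=
  [ffun i => if i == j then inord (x i).+1 else x i].

(* Oriented edges E_N: a triple (x, j, b) denotes the edge x -> x + e_j if
   b = true (positively oriented) and its reverse x + e_j -> x if b = false.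
   Both endpoints lie in B_N iff x_j < 2N. *)
Definition edge_valid N (t : vert N * 'I_4 * bool) : bool := (t.1.1 t.1.2 < N.*2)%N.
Definition edge N := {t : vert N * 'I_4 * bool | edge_valid t}.

Definition eflip N (t : vert N * 'I_4 * bool) : vert N * 'I_4 * bool :=
  (t.1.1, t.1.2, ~~ t.2).

(* Oriented plaquettes P_N: (x, j, k, b) with j < k; b = true is the
   positively oriented plaquette x + {a e_j + c e_k : a, c in [0,1]},
   b = false its negative.  All four vertices lie in B_N iff x_j, x_k < 2N. *)
Definition plaq_valid N (p : vert N * 'I_4 * 'I_4 * bool) : bool :=
  [&& (p.1.1.2 < p.1.2)%N, (p.1.1.1 p.1.1.2 < N.*2)%N & (p.1.1.1 p.1.2 < N.*2)%N].
Definition plaq N := {p : vert N * 'I_4 * 'I_4 * bool | plaq_valid p}.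

Definition bdry N (p : plaq N) : seq (vert N * 'I_4 * bool) :=
  let: (x, j, k, b) := val p in
  let pos := [:: (x, j, true); (shift x j, k, true);
                 (shift x k, j, false); (x, k, false)] in
  if b then pos else map (@eflip N) pos.

Section Model.
Variables (n : nat) (N : nat).
Local Notation G := 'Z_n.

(* value of sigma at an (edge) triple; 0 if the triple is not an edge of E_N *)
Definition sig_at (s : {ffun edge N -> G}) (t : vert N * 'I_4 * bool) : G :=
  oapp s 0 (insub t).

Definition is_config (s : {ffun edge N -> G}) : bool :=
  [forall e : edge N, sig_at s (eflip (val e)) == - s e].

Definition dsig (s : {ffun edge N -> G}) (p : plaq N) : G :=
  \sum_(t <- bdry p) sig_at s t.

Definition cfg_le (s' s : {ffun edge N -> G}) : bool :=
  [forall e : edge N, (s' e != 0) ==> (s e == s' e)] &&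
  [forall p : plaq N, (dsig s' p != 0) ==> (dsig s p == dsig s' p)].

Variables (R : realType) (rho : G -> R[i]).

(* phi_r, r in [0, +oo] (the -oo branch is never used) *)
Definition phi (r : \bar R) (g : G) : R :=
  match r with
  | r%:E => expR (r * (complex.Re (rho g) - 1))
  | +oo%E => (g == 0)%:R
  | -oo%E => 0
  end.

Definition phi_cfg (beta : \bar R) (kappa : R) (s : {ffun edge N -> G}) : R :=
  (\prod_(e : edge N) phi kappa%:E (s e)) *
  (\prod_(p : plaq N) phi beta (dsig s p)).

Definition mu (beta : \bar R) (kappa : R) (A : pred {ffun edge N -> G}) : R :=
  (\sum_(s | is_config s && A s) phi_cfg beta kappa s) /
  (\sum_(s | is_config s) phi_cfg beta kappa s).

End Model.

From mathcomp Require Import all_boot all_order all_algebra.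
From mathcomp Require Import reals constructive_ereal ereal.
From mathcomp.analysis Require Import sequences exp.
From mathcomp Require Import complex.
Import Order.TTheory GRing.Theory Num.Theory.
Local Open Scope ring_scope.

(* Every sigma >= sigma' is written as sigma = tau + sigma'.
   The relation sigma' <= tau + sigma' says exactly that tau vanishes on the
   support of sigma' and d tau vanishes on the support of d sigma' (the
   exterior derivative is additive).  Since phi_r(0) = 1 for r in [0, oo],
   every factor of the weight splits, phi_r(a + b) = phi_r(a) phi_r(b) when
   a = 0 or b = 0, hence
        phi_{beta,kappa}(tau + sigma') = phi_{beta,kappa}(sigma') phi_{beta,kappa}(tau).
   Configurations are closed under subtraction, so tau is again a
   configuration and tau |-> tau + sigma' is injective; summing gives
        sum_{sigma >= sigma'} phi(sigma) <= phi(sigma') * Z,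
   where Z is the partition function, and dividing by Z >= 0 proves the claim. *)

Section Configurations.
Variables (n N : nat).
Implicit Types (s t : {ffun edge N -> 'Z_n}).

Lemma sig_atD s t x : sig_at (s + t) x = sig_at s x + sig_at t x.
Proof. by rewrite /sig_at; case: insubP => [e _ _|_] /=; rewrite ?ffunE ?addr0. Qed.

Lemma sig_atN s x : sig_at (- s) x = - sig_at s x.
Proof. by rewrite /sig_at; case: insubP => [e _ _|_] /=; rewrite ?ffunE ?oppr0. Qed.

Lemma dsigD s t p : dsig (s + t) p = dsig s p + dsig t p.
Proof. by rewrite /dsig -big_split; apply: eq_bigr => x _; exact: sig_atD. Qed.

Lemma is_configB s t : is_config s -> is_config t -> is_config (s - t).
Proof.
move=> /forallP Hs /forallP Ht; apply/forallP => e.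
by rewrite sig_atD sig_atN (eqP (Hs e)) (eqP (Ht e)) !ffunE opprD.
Qed.

Lemma cfg_le_translate s' t :
  cfg_le s' (t + s') ->
  (forall e, s' e != 0 -> t e = 0) /\ (forall p, dsig s' p != 0 -> dsig t p = 0).
Proof.
move=> /andP[/forallP He /forallP Hp]; split.
- move=> e /(implyP (He e)); rewrite ffunE -{2}[s' e]add0r.
  by move=> /eqP/addIr.
- move=> p /(implyP (Hp p)); rewrite dsigD -{2}[dsig s' p]add0r.
  by move=> /eqP/addIr.
Qed.

End Configurations.

Lemma prod_disjoint_support (I : finType) (V : zmodType) (R : comPzRingType)
    (f : V -> R) (u v : I -> V) :
  f 0 = 1 -> (forall i, u i != 0 -> v i = 0) ->
  \prod_i f (u i + v i) = \prod_i f (u i) * \prod_i f (v i).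
Proof.
move=> f0 disj; rewrite -big_split; apply: eq_bigr => i _ /=.
have [->|/disj ->] := eqVneq (u i) 0.
  by rewrite add0r f0 mul1r.
by rewrite addr0 f0 mulr1.
Qed.

Section Weights.
Variables (n N : nat) (R : realType) (rho : 'Z_n -> R[i]).
Hypothesis rho0 : rho 0 = 1.
Implicit Types (s t : {ffun edge N -> 'Z_n}).

Lemma phi0 (r : \bar R) : (0 <= r)%E -> phi rho r 0 = 1.
Proof. by case: r => [r||] //= _; rewrite rho0 /= subrr mulr0 expR0. Qed.

Lemma phi_ge0 (r : \bar R) g : 0 <= phi rho r g.
Proof. by case: r => [r||] //=; rewrite ?expR_ge0 ?ler0n. Qed.

Lemma phi_cfg_ge0 beta kappa s : 0 <= phi_cfg rho beta kappa s.
Proof. by rewrite mulr_ge0 // prodr_ge0 // => *; exact: phi_ge0. Qed.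

Lemma phi_cfg_translate beta kappa s' t :
  (0 <= beta)%E -> 0 <= kappa -> cfg_le s' (t + s') ->
  phi_cfg rho beta kappa (t + s') =
  phi_cfg rho beta kappa s' * phi_cfg rho beta kappa t.
Proof.
move=> hbeta hkappa /cfg_le_translate[He Hp].
rewrite /phi_cfg mulrACA; congr (_ * _).
- under eq_bigr => e _ do rewrite ffunE addrC.
  by apply: prod_disjoint_support He; rewrite phi0 ?lee_fin.
- under eq_bigr => p _ do rewrite dsigD addrC.
  by apply: prod_disjoint_support Hp; rewrite phi0.
Qed.

Lemma sum_above_le beta kappa s' :
  (0 <= beta)%E -> 0 <= kappa -> is_config s' ->
  \sum_(s | is_config s && cfg_le s' s) phi_cfg rho beta kappa s <=
  phi_cfg rho beta kappa s' * \sum_(s : {ffun edge N -> 'Z_n} | is_config s) phi_cfg rho beta kappa s.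
Proof.
move=> hbeta hkappa hs'.
rewrite (reindex_inj (addIr s')) /= mulr_sumr.
rewrite [X in _ <= X]big_mkcond [X in X <= _]big_mkcond /=.
apply: ler_sum => t _.
case: (boolP (is_config (t + s') && cfg_le s' (t + s'))) => [/andP[ht hle]|_].
  have ht' : is_config t by rewrite -(addrK s' t) is_configB.
  by rewrite ht' phi_cfg_translate.
by case: ifP => _ //; rewrite mulr_ge0 ?phi_cfg_ge0.
Qed.

End Weights.

Lemma hom_unitary_0 (n : nat) (R : realType) (rho : 'Z_n -> R[i]) :
  (forall a b, rho (a + b) = rho a * rho b) -> `|rho 0| = 1 -> rho 0 = 1.
Proof.
move=> rho_hom rho0_unit.
have nz : rho 0 != 0 by rewrite -normr_eq0 rho0_unit oner_neq0.
by apply: (mulIf nz); rewrite mul1r -rho_hom addr0.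
Qed.

Theorem mainTheorem9 (n : nat) (hn : (1 < n)%N) (R : realType)
  (rho : 'Z_n -> R[i])
  (rho_hom : forall a b : 'Z_n, rho (a + b) = rho a * rho b)
  (rho_unitary : forall g : 'Z_n, `|rho g| = 1)
  (rho_faithful : injective rho)
  (N : nat) (s' : {ffun edge N -> 'Z_n}) (hs' : is_config s')
  (beta : \bar R) (hbeta : (0 <= beta)%E) (kappa : R) (hkappa : 0 <= kappa) :
  mu rho beta kappa (fun s => cfg_le s' s) <= phi_cfg rho beta kappa s'.
Proof.
have rho0 : rho 0 = 1 by apply: hom_unitary_0.
have above := @sum_above_le n N R rho rho0 beta kappa s' hbeta hkappa hs'.
set Z := \sum_(s : {ffun edge N -> 'Z_n} | is_config s) phi_cfg rho beta kappa s
  in above.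
rewrite /mu -/Z.
have Z_ge0 : 0 <= Z by rewrite sumr_ge0 // => s _; exact: phi_cfg_ge0.
have [Z_eq0|Z_gt0] := eqVneq Z 0; last by rewrite ler_pdivrMr // lt0r Z_gt0.
by rewrite Z_eq0 invr0 mulr0 phi_cfg_ge0.
Qed.
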